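(* The function \[ F(x)=\frac{2\sqrt2+(1+x)^{1/2}}{(1-x)^{1/2}}\arccos x \] is strictly decreasing on $(0,1)$. Consequently, for all $x\in(0,1)$, \[ \frac{6(1-x)^{1/2}}{2\sqrt2+(1+x)^{1/2}}<\arccos x<\frac{\bigl(\frac12+\sqrt2\bigr)\pi\,(1-x)^{1/2}}{2\sqrt2+(1+x)^{1/2}}, \] and the constants $6$ and $\bigl(\frac12+\sqrt2\bigr)\pi$ are the best possible (i.e. $6$ cannot be replaced by a larger constant and $(\frac12+\sqrt2)\pi$ cannot be replaced by a smaller constant).
   Context: $\arccos$ denotes the principal inverse cosine with values in $[0,\pi]$. *)

From Stdlib Require Import Reals.
Open Scope R_scope.

Definition F3 (x : R) : R :=
  (2 * sqrt 2 + sqrt (1 + x)) / sqrt (1 - x) * acos x.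

(* common factor (1-x)^(1/2) / (2 sqrt 2 + (1+x)^(1/2)) in the bounds *)
Definition g3 (x : R) : R :=
  sqrt (1 - x) / (2 * sqrt 2 + sqrt (1 + x)).

(* The substitution x = cos (2u), u in (0, pi/4), turns the statement into a
   statement about elementary trigonometric functions: sqrt (1 - x) = sqrt 2 sin u,
   sqrt (1 + x) = sqrt 2 cos u and acos x = 2u, so that
     F3 x = Phi u := 2u (2 + cos u) / sin u,   and   acos x = F3 x * g3 x.
   Since u = acos x / 2 decreases with x, F3 is strictly decreasing iff Phi is
   strictly increasing on (0, pi/4).  Both this and the lower bound 6 < Phi u
   follow from the mean value theorem: each needed inequality is of the form
   0 < f u with f 0 = 0 and a derivative f' that is positive by an earlier
   inequality of the same form (the chain  u cos u < sin u,
   u sin u < 2 - 2 cos u,  3 sin u < u (2 + cos u)).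
   Hence 6 < F3 x < Phi (pi/4) = (1/2 + sqrt 2) pi on (0,1), which gives the
   two-sided bound after multiplying by g3 x > 0.  Optimality of the constants
   is an approximation argument: Phi u <= 6 + 12 u near 0 and
   Phi u > 2u (2 sqrt 2 + 1) = Phi (pi/4) - 2 (2 sqrt 2 + 1) (pi/4 - u) below
   pi/4, so 6 and (1/2 + sqrt 2) pi are the infimum and supremum of F3. *)

From Stdlib Require Import Reals Lra.
From Coquelicot Require Import Coquelicot.
Open Scope R_scope.

Lemma increasing_of_derive_pos (f f' : R -> R) (a b : R) : a < b ->
  (forall c, a <= c <= b -> is_derive f c (f' c)) ->
  (forall c, a < c < b -> 0 < f' c) -> f a < f b.
Proof.
  intros Hab Hd Hpos.
  destruct (MVT_cor2 f f' a b Hab) as [c [Hfc Hc]].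
  - intros c Hc; apply is_derive_Reals, Hd, Hc.
  - assert (0 < f' c * (b - a)) by (apply Rmult_lt_0_compat; [apply Hpos, Hc | lra]).
    lra.
Qed.

Lemma le_of_le_add_eps (c a K delta : R) : 0 < delta ->
  (forall e, 0 < e < delta -> c <= a + K * e) -> c <= a.
Proof.
  intros Hdelta Hc.
  destruct (Rle_dec c a) as [|Hca]; [assumption | exfalso].
  set (e := Rmin (delta / 2) ((c - a) / (2 * (Rabs K + 1)))).
  assert (HK : 0 < Rabs K + 1) by (generalize (Rabs_pos K); lra).
  assert (He1 : e <= delta / 2) by apply Rmin_l.
  assert (He2 : e <= (c - a) / (2 * (Rabs K + 1))) by apply Rmin_r.
  assert (He0 : 0 < e).
  { apply Rmin_glb_lt; [lra | apply Rdiv_lt_0_compat; lra]. }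
  assert (HKe : K * e <= (c - a) / 2).
  { apply (Rle_trans _ ((Rabs K + 1) * e)).
    - generalize (Rle_abs K); nra.
    - apply (Rmult_le_compat_l (Rabs K + 1)) in He2; [|lra].
      replace ((Rabs K + 1) * ((c - a) / (2 * (Rabs K + 1)))) with ((c - a) / 2)
        in He2 by (field; lra).
      exact He2. }
  specialize (Hc e ltac:(lra)). lra.
Qed.

(* u cos u < sin u, since (sin u - u cos u)' = u sin u > 0. *)
Lemma mul_cos_lt_sin (u : R) : 0 < u < PI -> u * cos u < sin u.
Proof.
  intros Hu.
  assert (H := increasing_of_derive_pos (fun t => sin t - t * cos t)
                 (fun t => t * sin t) 0 u ltac:(lra)).
  cbv beta in H; rewrite sin_0, cos_0 in H.
  enough (0 - 0 * 1 < sin u - u * cos u) by lra.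
  apply H.
  - intros c _; auto_derive; [exact I | ring].
  - intros c Hc; apply Rmult_lt_0_compat; [lra | apply sin_gt_0; lra].
Qed.

(* u sin u < 2 - 2 cos u, since the derivative of the difference is
   sin u - u cos u > 0. *)
Lemma mul_sin_lt_two_sub_two_cos (u : R) : 0 < u < PI -> u * sin u < 2 - 2 * cos u.
Proof.
  intros Hu.
  assert (H := increasing_of_derive_pos (fun t => 2 - 2 * cos t - t * sin t)
                 (fun t => sin t - t * cos t) 0 u ltac:(lra)).
  cbv beta in H; rewrite sin_0, cos_0 in H.
  enough (2 - 2 * 1 - 0 * 0 < 2 - 2 * cos u - u * sin u) by lra.
  apply H.
  - intros c _; auto_derive; [exact I | ring].
  - intros c Hc; generalize (mul_cos_lt_sin c ltac:(lra)); lra.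
Qed.

(* 3 sin u < u (2 + cos u): the lower bound 6 < F3. *)
Lemma three_sin_lt (u : R) : 0 < u < PI -> 3 * sin u < u * (2 + cos u).
Proof.
  intros Hu.
  assert (H := increasing_of_derive_pos (fun t => t * (2 + cos t) - 3 * sin t)
                 (fun t => 2 - 2 * cos t - t * sin t) 0 u ltac:(lra)).
  cbv beta in H; rewrite sin_0, cos_0 in H.
  enough (0 * (2 + 1) - 3 * 0 < u * (2 + cos u) - 3 * sin u) by lra.
  apply H.
  - intros c _; auto_derive; [exact I | ring].
  - intros c Hc; generalize (mul_sin_lt_two_sub_two_cos c ltac:(lra)); lra.
Qed.

(* F3 in the variable u = acos x / 2. *)
Definition Phi (u : R) : R := 2 * u * (2 + cos u) / sin u.

Lemma Phi_mul_sin (u : R) : sin u <> 0 -> Phi u * sin u = 2 * u * (2 + cos u).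
Proof. intros Hs; unfold Phi; field; exact Hs. Qed.

(* The numerator of Phi' (up to the factor 2 / sin^2 u) is positive: it
   vanishes at 0 and has derivative 2 sin u (u - sin u) > 0. *)
Lemma Phi_numerator_pos (u : R) : 0 < u < PI ->
  0 < 2 * sin u + sin u * cos u - u - 2 * u * cos u.
Proof.
  intros Hu.
  assert (H := increasing_of_derive_pos
                 (fun t => 2 * sin t + sin t * cos t - t - 2 * t * cos t)
                 (fun t => 2 * sin t * (t - sin t)) 0 u ltac:(lra)).
  cbv beta in H; rewrite sin_0, cos_0 in H.
  enough (2 * 0 + 0 * 1 - 0 - 2 * 0 * 1 <
          2 * sin u + sin u * cos u - u - 2 * u * cos u) by lra.
  apply H.
  - intros c _; auto_derive; [exact I |].
    generalize (sin2_cos2 c); unfold Rsqr; nra.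
  - intros c Hc.
    assert (sin c < c) by (apply sin_lt_x; lra).
    assert (0 < sin c) by (apply sin_gt_0; lra).
    apply Rmult_lt_0_compat; lra.
Qed.

Lemma Phi_increasing (a b : R) : 0 < a -> a < b -> b < PI -> Phi a < Phi b.
Proof.
  intros Ha Hab Hb.
  apply (increasing_of_derive_pos Phi
    (fun c => 2 * (2 * sin c + sin c * cos c - c - 2 * c * cos c) / (sin c * sin c))
    a b Hab).
  - intros c Hc.
    assert (0 < sin c) by (apply sin_gt_0; lra).
    unfold Phi; auto_derive; [lra |].
    field_simplify; [| lra | lra].
    generalize (sin2_cos2 c); unfold Rsqr; intro E.
    replace (cos c ^ 2) with (1 - sin c ^ 2) by (rewrite <- E; ring).
    field; lra.
  - intros c Hc.
    assert (0 < sin c) by (apply sin_gt_0; lra).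
    apply Rdiv_lt_0_compat; [generalize (Phi_numerator_pos c ltac:(lra)); lra | nra].
Qed.

Lemma six_lt_Phi (u : R) : 0 < u < PI -> 6 < Phi u.
Proof.
  intros Hu.
  assert (0 < sin u) by (apply sin_gt_0; lra).
  generalize (three_sin_lt u Hu); intro H3.
  apply (Rmult_lt_reg_r (sin u)); [lra |].
  rewrite Phi_mul_sin; lra.
Qed.

(* The value of F3 at the endpoint x = 0, i.e. the upper constant. *)
Lemma Phi_PI4 : Phi (PI / 4) = (1 / 2 + sqrt 2) * PI.
Proof.
  unfold Phi; rewrite cos_PI4, sin_PI4.
  assert (sqrt 2 * sqrt 2 = 2) by (apply sqrt_sqrt; lra).
  generalize Rlt_sqrt2_0; intro.
  field_simplify; lra.
Qed.

Lemma Phi_le_near_0 (e : R) : 0 < e <= 1 / 2 -> Phi e <= 6 + 12 * e.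
Proof.
  intros He. generalize PI2_1; intro HPI.
  assert (Hs : 0 < sin e) by (apply sin_gt_0; lra).
  assert (Hc : 0 < cos e) by (apply cos_gt_0; lra).
  assert (Hsx : sin e < e) by (apply sin_lt_x; lra).
  assert (Hsin : e * cos e < sin e) by (apply mul_cos_lt_sin; lra).
  assert (Hcos : 1 - e <= cos e).
  { generalize (sin2_cos2 e) (SIN_bound e); unfold Rsqr; nra. }
  apply (Rmult_le_reg_r (sin e)); [lra |].
  rewrite Phi_mul_sin by lra.
  assert (e * (1 - e) <= e * cos e) by nra.
  nra.
Qed.

(* Below pi/4, Phi u > 2u (2 sqrt 2 + 1), and Phi (pi/4) = 2 (pi/4) (2 sqrt 2 + 1). *)
Lemma Phi_gt_near_PI4 (u : R) : 0 < u < PI / 4 -> 2 * u * (2 * sqrt 2 + 1) < Phi u.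
Proof.
  intros Hu.
  set (a := sqrt 2).
  assert (Ha : 0 < a) by apply Rlt_sqrt2_0.
  assert (Haa : a * a = 2) by (apply sqrt_sqrt; lra).
  assert (Hs : 0 < sin u) by (apply sin_gt_0; lra).
  assert (Hsa : sin u * a < 1).
  { assert (Hlt : sin u < sin (PI / 4)) by (apply sin_increasing_1; lra).
    rewrite sin_PI4 in Hlt; fold a in Hlt.
    apply (Rmult_lt_compat_r a) in Hlt; [| lra].
    replace (1 / a * a) with 1 in Hlt by (field; lra). exact Hlt. }
  assert (Hca : 1 < cos u * a).
  { assert (Hlt : cos (PI / 4) < cos u) by (apply cos_decreasing_1; lra).
    rewrite cos_PI4 in Hlt; fold a in Hlt.
    apply (Rmult_lt_compat_r a) in Hlt; [| lra].
    replace (1 / a * a) with 1 in Hlt by (field; lra). exact Hlt. }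
  apply (Rmult_lt_reg_r (sin u)); [lra |].
  rewrite Phi_mul_sin by lra.
  assert (E1 : u * (sin u * a) < u * 1) by (apply Rmult_lt_compat_l; lra).
  assert (E2 : u * 1 < u * (cos u * a)) by (apply Rmult_lt_compat_l; lra).
  nra.
Qed.

Lemma acos_decreasing (x y : R) : -1 <= x -> x < y -> y <= 1 -> acos y < acos x.
Proof.
  intros Hx Hxy Hy.
  apply cos_decreasing_0; try apply acos_bound.
  rewrite !cos_acos; lra.
Qed.

Lemma acos_range (x : R) : 0 < x < 1 -> 0 < acos x < PI / 2.
Proof.
  intros Hx. rewrite <- acos_1, <- acos_0.
  split; apply acos_decreasing; lra.
Qed.

Lemma cos2_range (u : R) : 0 < u < PI / 4 -> 0 < cos (2 * u) < 1.
Proof.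
  intros Hu.
  split; [apply cos_gt_0; lra |].
  rewrite <- cos_0; apply cos_decreasing_1; lra.
Qed.

(* Half-angle formulas: sqrt (1 -+ cos 2u) = sqrt 2 (sin u, cos u). *)
Lemma F3_cos2 (u : R) : 0 < u < PI / 2 -> F3 (cos (2 * u)) = Phi u.
Proof.
  intros Hu.
  assert (Hs : 0 < sin u) by (apply sin_gt_0; lra).
  assert (Hc : 0 < cos u) by (apply cos_gt_0; lra).
  assert (Ha : 0 < sqrt 2) by apply Rlt_sqrt2_0.
  assert (Hminus : sqrt (1 - cos (2 * u)) = sqrt 2 * sin u).
  { rewrite cos_2a_sin.
    replace (1 - (1 - 2 * sin u * sin u)) with (2 * (sin u * sin u)) by ring.
    rewrite sqrt_mult, sqrt_square by nra; reflexivity. }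
  assert (Hplus : sqrt (1 + cos (2 * u)) = sqrt 2 * cos u).
  { rewrite cos_2a_cos.
    replace (1 + (2 * cos u * cos u - 1)) with (2 * (cos u * cos u)) by ring.
    rewrite sqrt_mult, sqrt_square by nra; reflexivity. }
  unfold F3, Phi; rewrite Hminus, Hplus, acos_cos by lra.
  field; split; lra.
Qed.

Lemma F3_as_Phi (x : R) : 0 < x < 1 -> F3 x = Phi (acos x / 2).
Proof.
  intros Hx. generalize (acos_range x Hx); intro.
  rewrite <- F3_cos2 by lra.
  replace (2 * (acos x / 2)) with (acos x) by field.
  rewrite cos_acos; lra.
Qed.

Lemma g3_pos (x : R) : x < 1 -> 0 < g3 x.
Proof.
  intros Hx. unfold g3.
  apply Rdiv_lt_0_compat; [apply sqrt_lt_R0; lra |].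
  generalize Rlt_sqrt2_0 (sqrt_pos (1 + x)); lra.
Qed.

(* The bounds on acos are bounds on F3, because acos = F3 * g3. *)
Lemma acos_eq_F3_mul_g3 (x : R) : x < 1 -> acos x = F3 x * g3 x.
Proof.
  intros Hx. unfold F3, g3.
  assert (0 < sqrt (1 - x)) by (apply sqrt_lt_R0; lra).
  generalize Rlt_sqrt2_0 (sqrt_pos (1 + x)); intros.
  field; lra.
Qed.

(* The first claim: F3 = Phi (acos / 2) with acos decreasing, Phi increasing. *)
Lemma F3_decreasing (x y : R) : 0 < x -> x < y -> y < 1 -> F3 y < F3 x.
Proof.
  intros Hx Hxy Hy.
  generalize (acos_range x ltac:(lra)) (acos_range y ltac:(lra))
             (acos_decreasing x y ltac:(lra) Hxy ltac:(lra)); intros.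
  rewrite !F3_as_Phi by lra.
  apply Phi_increasing; lra.
Qed.

Lemma F3_bounds (x : R) : 0 < x < 1 -> 6 < F3 x < (1 / 2 + sqrt 2) * PI.
Proof.
  intros Hx. generalize (acos_range x Hx) PI2_1; intros.
  rewrite F3_as_Phi, <- Phi_PI4 by lra.
  split; [apply six_lt_Phi | apply Phi_increasing]; lra.
Qed.

(* 6 is the infimum of F3 on (0, 1): approach x = 1, i.e. u = 0. *)
Lemma F3_inf (c : R) : (forall x, 0 < x < 1 -> c <= F3 x) -> c <= 6.
Proof.
  intros Hc. generalize PI2_1; intro.
  apply (le_of_le_add_eps c 6 12 (1 / 2)); [lra |].
  intros e He.
  apply (Rle_trans _ (F3 (cos (2 * e)))).
  - apply Hc, cos2_range; lra.
  - rewrite F3_cos2 by lra. apply Phi_le_near_0; lra.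
Qed.

(* (1/2 + sqrt 2) pi is the supremum of F3 on (0, 1): approach x = 0. *)
Lemma F3_sup (c : R) : (forall x, 0 < x < 1 -> F3 x <= c) -> (1 / 2 + sqrt 2) * PI <= c.
Proof.
  intros Hc. generalize PI2_1; intro.
  apply (le_of_le_add_eps _ c (2 * (2 * sqrt 2 + 1)) (PI / 4)); [lra |].
  intros e He.
  assert (Hphi := Phi_gt_near_PI4 (PI / 4 - e) ltac:(lra)).
  specialize (Hc (cos (2 * (PI / 4 - e))) (cos2_range (PI / 4 - e) ltac:(lra))).
  rewrite F3_cos2 in Hc by lra.
  replace ((1 / 2 + sqrt 2) * PI) with (2 * (PI / 4 - e) * (2 * sqrt 2 + 1) + 2 * (2 * sqrt 2 + 1) * e)
    by field.
  lra.
Qed.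

Theorem theorem3 :
  (* F is strictly decreasing on (0,1) *)
  (forall x y : R, 0 < x -> x < y -> y < 1 -> F3 y < F3 x) /\
  (* the two-sided bound *)
  (forall x : R, 0 < x < 1 ->
     6 * g3 x < acos x /\ acos x < (1/2 + sqrt 2) * PI * g3 x) /\
  (* 6 is best possible: no larger constant gives a lower bound *)
  (forall c : R, (forall x : R, 0 < x < 1 -> c * g3 x <= acos x) -> c <= 6) /\
  (* (1/2 + sqrt 2) pi is best possible: no smaller constant gives an upper bound *)
  (forall c : R, (forall x : R, 0 < x < 1 -> acos x <= c * g3 x) ->
     (1/2 + sqrt 2) * PI <= c).
Proof.
  split; [exact F3_decreasing | split; [| split]].
  - intros x Hx.
    rewrite acos_eq_F3_mul_g3 by lra.
    generalize (F3_bounds x Hx) (g3_pos x ltac:(lra)); intros [H6 Hup] Hg.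
    split; apply Rmult_lt_compat_r; lra.
  - intros c Hc; apply F3_inf; intros x Hx.
    apply (Rmult_le_reg_r (g3 x)); [apply g3_pos; lra |].
    rewrite <- acos_eq_F3_mul_g3 by lra. apply Hc, Hx.
  - intros c Hc; apply F3_sup; intros x Hx.
    apply (Rmult_le_reg_r (g3 x)); [apply g3_pos; lra |].
    rewrite <- acos_eq_F3_mul_g3 by lra. apply Hc, Hx.
Qed.
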